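(* Let $C\subseteq\mathbb{R}^{n+1}$ be a proper open cone with base-point $b\in C$, let $S,T\in\mathcal T(C)\setminus\{C\}$, $p\in S$, $q\in T$, and suppose $f_{S,p}|_C$ and $f_{T,q}|_C$ are Busemann points of the Funk geometry on $C$. Then \[\inf_{(x_k)_k}\ \liminf_{k\to\infty}\big(\mathcal F_C(b,x_k)+f_{T,q}(x_k)\big)=\begin{cases}\mathcal F_S(b,p)+\mathcal F_T(p,q)-\mathcal F_T(b,q) & \text{if } S\subseteq T,\\ \infty & \text{otherwise,}\end{cases}\] where the infimum is taken over all sequences $(x_k)_k$ in $C$ converging to $f_{S,p}|_C$ in the Funk sense on $C$.
   Context: An open cone is a nonempty open convex $C$ with $\lambda C\subseteq C$ for $\lambda>0$; proper means $\overline C\cap(-\overline C)=\{0\}$. For an open cone $K$, $y\in K$ and $x\in\mathbb{R}^{n+1}$, $M(x/y;K)=\inf\{\lambda>0\colon\lambda y-x\in\overline K\}$ and the Funk metric is $\mathcal F_K(x,y)=\log M(x/y;K)$. For $z\in\partial C$, $\tau(C,z)=\{\lambda(w-z)\colon\lambda>0,w\in C\}$; for a collection $\Pi$ of open cones $\Gamma(\Pi)=\{\tau(T,z)\colon T\in\Pi,z\in\partial T\}$, and $\mathcal T(C)=\bigcup_{k=1}^n\Gamma^k(\{C\})$ (all these cones contain $C$). For $T\in\mathcal T(C)$ (or $T=C$) and $p\in T$, $f_{T,p}(w)=\mathcal F_T(w,p)-\mathcal F_T(b,p)$. A sequence $(x_k)$ in $C$ converges to $f\colon C\to\mathbb{R}$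 in the Funk sense on $C$ if $f_{C,x_k}\to f$ pointwise on $C$. A function $f\colon C\to\mathbb{R}$ is a Busemann point of the Funk geometry on $C$ if some sequence $(x_k)$ in $C$ that is a Funk-metric $\epsilon$-almost-geodesic for some $\epsilon>0$ (i.e. $\sum_{i=0}^{m}\mathcal F_C(x_i,x_{i+1})\leq\mathcal F_C(x_0,x_{m+1})+\epsilon$ for all $m\geq0$) converges to $f$ in the Funk sense, and $f$ is not of the form $\mathcal F_C(\cdot,p)-\mathcal F_C(b,p)$ with $p\in C$. *)

From HB Require Import structures.
From mathcomp Require Import all_boot all_order all_algebra.
From mathcomp Require Import all_classical all_reals all_analysis.
Set Implicit Arguments. Unset Strict Implicit. Unset Printing Implicit Defensive.
Import Order.TTheory GRing.Theory Num.Theory.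
Import numFieldNormedType.Exports.
Local Open Scope classical_set_scope.
Local Open Scope ring_scope.

Section Funk.
Variables (R : realType) (n : nat).
Local Notation V := 'rV[R]_(n.+1).

Definition convex_set_ (C : set V) : Prop :=
  forall x y t, C x -> C y -> 0 <= t -> t <= 1 -> C (t *: x + (1 - t) *: y).

Definition open_cone (C : set V) : Prop :=
  C !=set0 /\ open C /\ convex_set_ C /\
  (forall (l : R) x, 0 < l -> C x -> C (l *: x)).

Definition proper_cone (C : set V) : Prop :=
  closure C `&` [set x | closure C (- x)] = [set 0].

Definition bdry (C : set V) : set V := closure C `\` interior C.

Definition tau (C : set V) (z : V) : set V :=
  [set v | exists l : R, exists w : V, 0 < l /\ C w /\ v = l *: (w - z)].

Definition Gamma (Pi : set (set V)) : set (set V) :=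
  [set K | exists T : set V, exists z : V,
     Pi T /\ open_cone T /\ bdry T z /\ K = tau T z].

Definition Tcones (C : set V) : set (set V) :=
  [set K | exists k : nat, (1 <= k <= n)%N /\ iter k Gamma [set C] K].

Definition Mfunk (K : set V) (x y : V) : R :=
  inf [set l : R | 0 < l /\ closure K (l *: y - x)].

Definition funk (K : set V) (x y : V) : R := ln (Mfunk K x y).

Definition fTp (b : V) (T : set V) (p : V) (w : V) : R :=
  funk T w p - funk T b p.

Definition funk_conv (C : set V) (b : V) (x : nat -> V) (f : V -> R) : Prop :=
  forall w, C w -> (fun k => fTp b C (x k) w) @ \oo --> f w.

Definition almost_geodesic (C : set V) (eps : R) (x : nat -> V) : Prop :=
  (forall k, C (x k)) /\
  forall m : nat,
    \sum_(i < m.+1) funk C (x i) (x i.+1) <= funk C (x 0%N) (x m.+1) + eps.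

Definition busemann (C : set V) (b : V) (f : V -> R) : Prop :=
  (exists (x : nat -> V) (eps : R),
      0 < eps /\ almost_geodesic C eps x /\ funk_conv C b x f) /\
  ~ (exists p, C p /\ forall w, C w -> f w = fTp b C p w).

End Funk.

From HB Require Import structures.
From mathcomp Require Import all_boot all_order all_algebra.
From mathcomp Require Import all_classical all_reals all_analysis.
From mathcomp Require Import ring lra.
Import Order.TTheory GRing.Theory Num.Theory.
Import numFieldNormedType.Exports.
Local Open Scope classical_set_scope.
Local Open Scope ring_scope.

(* Each cone [S] of [Tcones C] has three properties, all of which pass from a
   cone to its tangent cones.  First, every [p] in [S] is a Funk limit, seen
   from [C], of points [x k] of [C] lying below [p] in the order of [S]; this
   is a diagonal argument over a dense sequence of [C], and along [x k] the
   triangle inequality gives the value [F_S(b,p) + F_T(p,q) - F_T(b,q)] when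
   [S] is inside [T].  Second, every [p] in [S] agrees with some [w] in [C]
   modulo the lineality space of the closure of [S]; evaluating the Funk
   limit at [w] gives the matching lower bound.  Third, if [S] is not inside
   [T], there is a direction [d] of [S] with [-d] outside the closure of [T];
   along it [F_T(., q)] is unbounded while the distance to [p] in [S] stays
   bounded, so every Funk-convergent sequence has infinite lim inf. *)

Ltac row_eq := apply/rowP => ?; rewrite !mxE; ring.

Section OpenCone.
Context {R : realType} {n : nat}.
Local Notation V := 'rV[R]_(n.+1).
Implicit Types (K : set V) (u v w : V).

Lemma open_normball {K u} : open K -> K u ->
  exists2 r : R, 0 < r & forall v, `|u - v| < r -> K v.
Proof.
move=> oK Ku; have : nbhs u K by apply: open_nbhs_nbhs.
case/nbhs_ballP=> r r0 uK; exists r => // v uv; apply: uK.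
by rewrite -ball_normE.
Qed.

Lemma closure_normP K v :
  closure K v <-> forall r : R, 0 < r -> exists2 u, K u & `|v - u| < r.
Proof.
split=> [clv r r0 | near_v B /nbhs_ballP [r r0 rB]].
  have : nbhs v (ball v r) by apply: nbhsx_ballx.
  by case/clv=> u [Ku]; rewrite -ball_normE /= => vu; exists u.
have [u Ku vu] := near_v r r0; exists u; split => //; apply: rB.
by rewrite -ball_normE.
Qed.

Lemma open_coneZ {K l v} : open_cone K -> 0 < l -> K v -> K (l *: v).
Proof. by case=> _ [_ [_ KZ]]; apply: KZ. Qed.

Lemma open_coneD {K u v} : open_cone K -> K u -> K v -> K (u + v).
Proof.
move=> cK Ku Kv; case: (cK) => _ [_ [convK _]].
have half_ge0 : 0 <= (2^-1 : R) by rewrite invr_ge0.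
have half_le1 : (2^-1 : R) <= 1 by rewrite invf_le1 // ler1n.
have := open_coneZ cK (ltr0Sn R 1) (convK u v _ Ku Kv half_ge0 half_le1).
have -> : (1 - 2^-1 : R) = 2^-1 by rewrite {1}(splitr 1) mul1r addrK.
by rewrite scalerDr !scalerA divff ?pnatr_eq0 // !scale1r.
Qed.

Lemma open_segment {K u} v : open K -> K u ->
  exists2 d : R, 0 < d & forall s, 0 <= s -> s <= d -> K (u + s *: v).
Proof.
move=> oK Ku; have [r r0 uK] := open_normball oK Ku.
exists (r / (`|v| + 1)); first by rewrite divr_gt0 // ltr_pwDr.
move=> s s0 sd; apply: uK; rewrite opprD addrA subrr add0r normrN normrZ.
rewrite ger0_norm //; apply: (le_lt_trans (y := r / (`|v| + 1) * `|v|)).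
  by rewrite ler_wpM2r.
by rewrite -mulrA gtr_pMr // ltr_pdivrMl ?mulr1 ?ltrDl.
Qed.

Lemma closure_open_coneD {K v k} : open_cone K -> closure K v -> K k ->
  K (v + k).
Proof.
move=> cK clv Kk; have [r r0 kK] := open_normball cK.2.1 Kk.
have [u Ku vu] := (closure_normP K v).1 clv _ r0.
have -> : v + k = u + (k + (v - u)).
  by rewrite [k + _]addrC addrA [u + _]addrC subrK.
apply: open_coneD => //; apply: kK.
by rewrite opprD addrA subrr add0r normrN.
Qed.

Lemma closure_of_shift {K v k} : open_cone K -> K k ->
  (forall e : R, 0 < e -> K (v + e *: k)) -> closure K v.
Proof.
move=> cK Kk shiftK; apply/closure_normP => r r0.
have e0 : 0 < r / (`|k| + 1) by rewrite divr_gt0 // ltr_pwDr.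
exists (v + (r / (`|k| + 1)) *: k); first exact: shiftK.
rewrite opprD addrA subrr add0r normrN normrZ ger0_norm ?ltW //.
by rewrite -mulrA gtr_pMr // ltr_pdivrMl ?mulr1 ?ltrDl.
Qed.

Lemma closure_coneD {K u v} : open_cone K -> closure K u -> closure K v ->
  closure K (u + v).
Proof.
move=> cK clu clv; have [k Kk] := cK.1.
apply: (closure_of_shift cK Kk) => e e0; rewrite -addrA.
by apply: closure_open_coneD clu _ => //; apply: closure_open_coneD clv _ => //;
  exact: open_coneZ.
Qed.

Lemma closure_coneZ {K l v} : open_cone K -> 0 <= l -> closure K v ->
  closure K (l *: v).
Proof.
move=> cK; rewrite le_eqVlt => /orP [/eqP <- _ | l0 clv].
  have [k Kk] := cK.1; apply: (closure_of_shift cK Kk) => e e0.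
  by rewrite scale0r add0r; exact: open_coneZ.
have [k Kk] := cK.1; apply: (closure_of_shift cK Kk) => e e0.
have -> : l *: v + e *: k = l *: (v + (e / l) *: k).
  by rewrite scalerDr scalerA mulrCA divff ?gt_eqF // mulr1.
by apply: open_coneZ => //; apply: closure_open_coneD clv _ => //;
  apply: open_coneZ => //; exact: divr_gt0.
Qed.

Lemma closure_cone0 {K} : open_cone K -> closure K 0.
Proof.
move=> cK; have [k Kk] := cK.1.
by rewrite -(scale0r k); apply: closure_coneZ => //; exact: subset_closure.
Qed.

Lemma closure_cone_comb {K a b x y z} : open_cone K -> 0 <= a ->
  closure K (b *: z - y) -> closure K (a *: y - x) -> closure K ((a * b) *: z - x).
Proof.
move=> cK a0 clb cla.
have -> : (a * b) *: z - x = a *: (b *: z - y) + (a *: y - x).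
  by rewrite scalerBr scalerA addrA subrK.
exact: closure_coneD cK (closure_coneZ cK a0 clb) cla.
Qed.

End OpenCone.

Lemma mul_perturb_le {R : realType} {A B d : R} : 0 <= A -> 0 <= B -> 0 < d ->
  exists2 e, 0 < e & (A + e) * (B + e) <= A * B + d.
Proof.
move=> A0 B0 d0; have P : 0 < A + B + 1 + d by lra.
exists (d / (A + B + 1 + d)); first exact: divr_gt0.
set e := d / _; have e0 : 0 < e by exact: divr_gt0.
have eP : e * (A + B + 1 + d) = d by rewrite /e divfK ?gt_eqF.
have e1 : e <= 1 by rewrite /e ler_pdivrMr // mul1r; lra.
nra.
Qed.

Lemma ln_ler {R : realType} {x y : R} : 0 < x -> x <= y -> ln x <= ln y.
Proof.
move=> x0 xy; have y0 := lt_le_trans x0 xy.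
by rewrite ler_ln // posrE.
Qed.

Section FunkGauge.
Context {R : realType} {n : nat}.
Local Notation V := 'rV[R]_(n.+1).
Implicit Types (K : set V) (u v w x y z : V).

(* An open cone omits 0 exactly when it is not the whole space. *)
Definition nontrivial_cone K := open_cone K /\ ~ K 0.

Definition Mfunk_set K x y := [set l : R | 0 < l /\ closure K (l *: y - x)].

Lemma Mfunk_set_has_inf {K} x {y} : open_cone K -> K y -> has_inf (Mfunk_set K x y).
Proof.
move=> cK Ky; split; last by exists 0 => l [/ltW].
have [d d0 segK] := open_segment (- x) cK.2.1 Ky.
have dV0 : 0 < d^-1 by rewrite invr_gt0.
exists d^-1; split => //; apply: subset_closure.
have := open_coneZ cK dV0 (segK d (ltW d0) (lexx _)).
by rewrite scalerDr scalerA mulVf ?gt_eqF // scale1r.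
Qed.

Lemma Mfunk_ge0 {K x y} : open_cone K -> K y -> 0 <= Mfunk K x y.
Proof.
move=> cK Ky; apply: lb_le_inf; first exact: (Mfunk_set_has_inf x cK Ky).1.
by move=> l [/ltW].
Qed.

Lemma Mfunk_le {K x y l} : 0 < l -> closure K (l *: y - x) -> Mfunk K x y <= l.
Proof. by move=> l0 cl; apply: ge_inf => //; exists 0 => m [/ltW]. Qed.

Lemma Mfunk_lt_closure {K x y mu} : open_cone K -> K y -> Mfunk K x y < mu ->
  closure K (mu *: y - x).
Proof.
move=> cK Ky Mmu; have gap : 0 < mu - Mfunk K x y by rewrite subr_gt0.
have [l [l0 cl] lmu] := inf_adherent gap (Mfunk_set_has_inf x cK Ky).
rewrite addrC subrK in lmu.
have -> : mu *: y - x = (l *: y - x) + (mu - l) *: y by row_eq.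
apply: closure_coneD cK cl (closure_coneZ cK _ (subset_closure Ky)).
by rewrite subr_ge0 ltW.
Qed.

Lemma Mfunk_lt_gt0 {K x y mu} : open_cone K -> K y -> Mfunk K x y < mu -> 0 < mu.
Proof. by move=> cK Ky; exact: le_lt_trans (Mfunk_ge0 cK Ky). Qed.

(* If the gauge vanished, [-x + e y] would lie in [K] for all [e > 0], so
   [-x] would lie in the closure of [K] and [0 = -x + x] in [K]. *)
Lemma Mfunk_gt0 {K x y} : nontrivial_cone K -> K x -> K y -> 0 < Mfunk K x y.
Proof.
move=> [cK nK0] Kx Ky; rewrite lt_neqAle (Mfunk_ge0 cK Ky) andbT.
apply/negP => /eqP M0; apply: nK0.
suff clx : closure K (- x) by rewrite -(addNr x); exact: closure_open_coneD.
apply: (closure_of_shift cK Ky) => e e0; have e2 : 0 < e / 2 by rewrite divr_gt0.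
have cl : closure K (e / 2 *: y - x) by apply: Mfunk_lt_closure; rewrite -?M0.
have := closure_open_coneD cK cl (open_coneZ cK e2 Ky).
by have -> : e / 2 *: y - x + e / 2 *: y = - x + e *: y
  by apply/rowP => i; rewrite !mxE; field.
Qed.

Lemma Mfunk_monol {K x x' y} : open_cone K -> K y -> closure K (x' - x) ->
  Mfunk K x y <= Mfunk K x' y.
Proof.
move=> cK Ky cl; apply/ler_addgt0Pr => e e0.
have Mmu : Mfunk K x' y < Mfunk K x' y + e by rewrite ltrDl.
apply: (Mfunk_le (Mfunk_lt_gt0 cK Ky Mmu)).
have -> : (Mfunk K x' y + e) *: y - x = (Mfunk K x' y + e) *: y - x' + (x' - x)
  by row_eq.
exact: closure_coneD cK (Mfunk_lt_closure cK Ky Mmu) cl.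
Qed.

Lemma Mfunk_antir {K x y y'} : open_cone K -> K y -> closure K (y' - y) ->
  Mfunk K x y' <= Mfunk K x y.
Proof.
move=> cK Ky cl; apply/ler_addgt0Pr => e e0.
have Mmu : Mfunk K x y < Mfunk K x y + e by rewrite ltrDl.
have mu0 := Mfunk_lt_gt0 cK Ky Mmu; apply: (Mfunk_le mu0).
have -> : (Mfunk K x y + e) *: y' - x =
  (Mfunk K x y + e) *: (y' - y) + ((Mfunk K x y + e) *: y - x) by row_eq.
exact: closure_coneD cK (closure_coneZ cK (ltW mu0) cl) (Mfunk_lt_closure cK Ky Mmu).
Qed.

Lemma Mfunk_self_le1 {K} y : open_cone K -> Mfunk K y y <= 1.
Proof.
by move=> cK; apply: (Mfunk_le ltr01); rewrite scale1r subrr; exact: closure_cone0.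
Qed.

Lemma Mfunk_triangle {K x y z} : open_cone K -> K y -> K z ->
  Mfunk K x z <= Mfunk K x y * Mfunk K y z.
Proof.
move=> cK Ky Kz; apply/ler_addgt0Pr => d d0.
have [e e0 perturb] :=
  mul_perturb_le (Mfunk_ge0 (x := x) cK Ky) (Mfunk_ge0 (x := y) cK Kz) d0.
apply: le_trans perturb.
have ha : Mfunk K x y < Mfunk K x y + e by rewrite ltrDl.
have hb : Mfunk K y z < Mfunk K y z + e by rewrite ltrDl.
have a0 := Mfunk_lt_gt0 cK Ky ha; have b0 := Mfunk_lt_gt0 cK Kz hb.
apply: (Mfunk_le (mulr_gt0 a0 b0)).
have clz := Mfunk_lt_closure cK Kz hb; have cly := Mfunk_lt_closure cK Ky ha.
exact: closure_cone_comb cK (ltW a0) clz cly.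
Qed.

Lemma Mfunk_le_subcone {K K' x y} : open_cone K -> open_cone K' -> K `<=` K' ->
  K y -> Mfunk K' x y <= Mfunk K x y.
Proof.
move=> cK cK' KK' Ky; apply: lb_le_inf; first exact: (Mfunk_set_has_inf x cK Ky).1.
move=> l [l0 cl]; apply: (Mfunk_le l0); exact: closureS cl.
Qed.

Lemma funk_triangle {K x y z} : nontrivial_cone K -> K x -> K y -> K z ->
  funk K x z <= funk K x y + funk K y z.
Proof.
move=> oK Kx Ky Kz.
have Mxy : Mfunk K x y \in Num.pos by rewrite posrE; exact: Mfunk_gt0.
have Myz : Mfunk K y z \in Num.pos by rewrite posrE; exact: Mfunk_gt0.
rewrite /funk -(lnM Mxy Myz).
exact: ln_ler (Mfunk_gt0 oK Kx Kz) (Mfunk_triangle oK.1 Ky Kz).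
Qed.

Lemma funk_le_subcone {K K' x y} : nontrivial_cone K -> nontrivial_cone K' ->
  K `<=` K' -> K x -> K y -> funk K' x y <= funk K x y.
Proof.
move=> oK oK' KK' Kx Ky; apply: ln_ler (Mfunk_le_subcone oK.1 oK'.1 KK' Ky).
exact: Mfunk_gt0 oK' (KK' _ Kx) (KK' _ Ky).
Qed.

Lemma funk_monol {K x x' y} : nontrivial_cone K -> K x -> K y ->
  closure K (x' - x) -> funk K x y <= funk K x' y.
Proof.
by move=> oK Kx Ky cl; exact: ln_ler (Mfunk_gt0 oK Kx Ky) (Mfunk_monol oK.1 Ky cl).
Qed.

Lemma funk_le0 {K x y} : nontrivial_cone K -> K x -> K y -> closure K (y - x) ->
  funk K x y <= 0.
Proof.
move=> oK Kx Ky cl; rewrite /funk -(@ln1 R).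
have Myy := Mfunk_self_le1 y oK.1.
exact: ln_ler (Mfunk_gt0 oK Kx Ky) (le_trans (Mfunk_monol oK.1 Ky cl) Myy).
Qed.

End FunkGauge.

Section TangentCone.
Context {R : realType} {n : nat}.
Local Notation V := 'rV[R]_(n.+1).
Implicit Types (C K S T : set V) (u v w x y z : V).

Lemma tauP {T z v} : open_cone T ->
  tau T z v <-> exists l : R, 0 < l /\ T (v + l *: z).
Proof.
move=> cT; split=> [[l [w [l0 [Tw ->]]]] | [l [l0 Tv]]].
  exists l; split => //; rewrite -scalerDr subrK; exact: open_coneZ.
exists l, (l^-1 *: (v + l *: z)); split => //; split.
  by apply: open_coneZ cT _ Tv; rewrite invr_gt0.
have ln0 : l != 0 by rewrite gt_eqF.
by apply/rowP => i; rewrite !mxE; field.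
Qed.

Context {T : set V} {z : V}.
Hypotheses (oT : nontrivial_cone T) (bz : bdry T z).

Let cT : open_cone T := oT.1.

Lemma bdry_closure : closure T z.
Proof. by case: bz. Qed.

Lemma bdry_notin : ~ T z.
Proof. by case: bz => _; rewrite ((interior_id T).1 cT.2.1). Qed.

Lemma sub_tau : T `<=` tau T z.
Proof.
move=> v Tv; apply/(tauP cT); exists 1; split; first exact: ltr01.
by rewrite scale1r addrC; exact: closure_open_coneD cT bdry_closure Tv.
Qed.

Lemma open_tau : open (tau T z).
Proof.
rewrite openE => v /(tauP cT) [l [l0 Tv]].
have [r r0 vK] := open_normball cT.2.1 Tv.
apply/nbhs_ballP; exists r => // u; rewrite -ball_normE /= => vu.
apply/(tauP cT); exists l; split => //; apply: vK.
by have -> : v + l *: z - (u + l *: z) = v - u by row_eq.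
Qed.

Lemma open_cone_tau : open_cone (tau T z).
Proof.
split; first by have [k Tk] := cT.1; exists k; exact: sub_tau.
split; first exact: open_tau.
split.
  move=> x y t /(tauP cT) [l1 [l10 T1]] /(tauP cT) [l2 [l20 T2]] t0 t1.
  apply/(tauP cT); exists (t * l1 + (1 - t) * l2); split; first by nra.
  have := cT.2.2.1 _ _ t T1 T2 t0 t1.
  by have -> : t *: (x + l1 *: z) + (1 - t) *: (y + l2 *: z) =
    t *: x + (1 - t) *: y + (t * l1 + (1 - t) * l2) *: z by row_eq.
move=> l x l0 /(tauP cT) [l1 [l10 T1]]; apply/(tauP cT).
exists (l * l1); split; first exact: mulr_gt0.
have -> : l *: x + (l * l1) *: z = l *: (x + l1 *: z) by row_eq.
exact: open_coneZ cT l0 T1.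
Qed.

Lemma nontrivial_tau : nontrivial_cone (tau T z).
Proof.
split; first exact: open_cone_tau.
move=> /(tauP cT) [l [l0]]; rewrite add0r => Tlz; apply: bdry_notin.
have lV0 : 0 < l^-1 by rewrite invr_gt0.
by have := open_coneZ cT lV0 Tlz; rewrite scalerA mulVf ?gt_eqF // scale1r.
Qed.

Lemma closure_tau_opp : closure (tau T z) (- z).
Proof.
have [k Tk] := cT.1.
apply: (closure_of_shift open_cone_tau (sub_tau _ Tk)) => e e0.
apply/(tauP cT); exists 1; split; first exact: ltr01.
have -> : - z + e *: k + 1 *: z = e *: k by row_eq.
exact: open_coneZ cT e0 Tk.
Qed.

Lemma closure_tau : closure (tau T z) z.
Proof. exact: closureS sub_tau _ bdry_closure. Qed.

End TangentCone.

Section EscapeDirections.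
Context {R : realType} {n : nat}.
Local Notation V := 'rV[R]_(n.+1).
Implicit Types (C K S T : set V) (u v w x y z : V).

(* Each point of [S] is congruent to a point of [C] modulo the lineality
   space of the closure of [S]. *)
Definition lineal_reach C S := forall p, S p ->
  exists w, C w /\ closure S (p - w) /\ closure S (w - p).

(* The witness of [~ S `<=` T]: a direction [d] along which a subcone of [S]
   runs while [-d] leaves the closure of [T], so that Funk gauges of [T] blow
   up along it. *)
Definition has_escape_directions C S :=
  forall T, open_cone T -> C `<=` T -> ~ (S `<=` T) ->
  exists S', nontrivial_cone S' /\ S' `<=` S /\ S' `<=` T /\ lineal_reach C S' /\
    exists d, closure S' d /\ closure S (- d) /\ ~ closure T (- d).

End EscapeDirections.

Record admissible {R : realType} {n : nat} (C S : set 'rV[R]_(n.+1)) : Prop :=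
Admissible {
  admissible_nontrivial : nontrivial_cone S;
  admissible_sub : C `<=` S;
  admissible_lineal : lineal_reach C S;
  admissible_escape : has_escape_directions C S }.

Arguments admissible_nontrivial {R n C S}.
Arguments admissible_sub {R n C S}.
Arguments admissible_lineal {R n C S}.
Arguments admissible_escape {R n C S}.

Section Admissible.
Context {R : realType} {n : nat}.
Local Notation V := 'rV[R]_(n.+1).
Implicit Types (C K S T : set V) (u v w x y z : V).

Lemma admissible_refl C : nontrivial_cone C -> admissible C C.
Proof.
move=> oC; split=> // p Cp.
by exists p; rewrite subrr; split => //; split; exact: closure_cone0 oC.1.
Qed.

Section TangentStep.
Variables (C T : set V) (z : V).
Hypotheses (AT : admissible C T) (bz : bdry T z).

Let oT := admissible_nontrivial AT.
Let cT : open_cone T := oT.1.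
Let cS : open_cone (tau T z) := open_cone_tau oT bz.

Lemma lineal_reach_tau : lineal_reach C (tau T z).
Proof.
move=> p /(tauP cT) [l [l0 Tp]].
have [w [Cw [clpw clwp]]] := admissible_lineal AT _ Tp.
exists w; split => //; split.
  have -> : p - w = (p + l *: z - w) + l *: (- z) by row_eq.
  apply: closure_coneD cS (closureS (sub_tau oT bz) clpw) _.
  exact: closure_coneZ cS (ltW l0) (closure_tau_opp oT bz).
have -> : w - p = (w - (p + l *: z)) + l *: z by row_eq.
apply: closure_coneD cS (closureS (sub_tau oT bz) clwp) _.
exact: closure_coneZ cS (ltW l0) (closure_tau oT bz).
Qed.

(* Either [T] itself is contained in [T'] and [z] is an escape direction, or
   [T] already has one. *)
Lemma escape_tau : has_escape_directions C (tau T z).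
Proof.
move=> T' cT' CT' nST'; have TS := sub_tau oT bz.
have [TT'|nTT'] := pselect (T `<=` T'); last first.
  have := admissible_escape AT T' cT' CT' nTT'.
  move=> [S' [oS' [S'T [S'T' [QS' [d [cld [clmd nclmd]]]]]]]].
  exists S'; split=> //; split; first by move=> v /S'T /TS.
  do 2!split=> //; exists d; split=> //; split=> //.
  exact: closureS TS _ clmd.
exists T; split=> //; split=> //; split=> //.
split; first exact: admissible_lineal AT.
exists z; split; first exact: bdry_closure bz.
split; first exact: closure_tau_opp oT bz.
move=> clmz; apply: nST' => v /(tauP cT) [l [l0 Tv]].
have := closure_open_coneD cT' (closure_coneZ cT' (ltW l0) clmz) (TT' _ Tv).
by have -> : l *: - z + (v + l *: z) = v by row_eq.
Qed.

Lemma admissible_tau : admissible C (tau T z).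
Proof.
split; [exact: nontrivial_tau | | exact: lineal_reach_tau | exact: escape_tau].
by move=> v /(admissible_sub AT) /(sub_tau oT bz).
Qed.

End TangentStep.

(* A cone containing a ball around 0 is everything, which contradicts
   properness. *)
Lemma proper_nontrivial {C} : open_cone C -> proper_cone C -> nontrivial_cone C.
Proof.
move=> cC pC; split => // C0.
have [r r0 C0r] := open_normball cC.2.1 C0.
have allC v : C v.
  pose c := r / (2 * (`|v| + 1)).
  have c0 : 0 < c by rewrite divr_gt0 // mulr_gt0 // ltr_pwDr.
  have : C (c *: v).
    apply: C0r; rewrite sub0r normrN normrZ ger0_norm ?(ltW c0) //.
    rewrite /c -mulrA gtr_pMr // ltr_pdivrMl ?mulr_gt0 ?ltr_pwDr //.
    have := normr_ge0 v; rewrite mulr1; lra.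
  have cV0 : 0 < c^-1 by rewrite invr_gt0.
  by move=> /(open_coneZ cC cV0); rewrite scalerA mulVf ?gt_eqF // scale1r.
have : (closure C `&` [set x | closure C (- x)]) (const_mx 1).
  by split; apply: subset_closure; apply: allC.
rewrite pC => /= /(congr1 (fun M : V => M 0 0)) /eqP.
by rewrite !mxE oner_eq0.
Qed.

Lemma admissible_iter {C k S} : nontrivial_cone C ->
  iter k (@Gamma R n) [set C] S -> admissible C S.
Proof.
move=> oC; elim: k S => [|k IH] S /=; first by move=> ->; exact: admissible_refl.
by move=> [T [z [PT [_ [bz ->]]]]]; apply: admissible_tau => //; exact: IH.
Qed.

End Admissible.

Lemma perturb_le_of_lt {R : realType} {g mu : R} : 0 <= g -> g < mu ->
  exists2 e, 0 < e & (1 + e) * ((1 + e) * g + e + e) <= mu.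
Proof.
move=> g0 gmu; have P : 0 < 3 * g + 4 + (mu - g) by lra.
exists ((mu - g) / (3 * g + 4 + (mu - g))); first by apply: divr_gt0 => //; lra.
set e := _ / _; have e0 : 0 < e by apply: divr_gt0 => //; lra.
have eP : e * (3 * g + 4 + (mu - g)) = mu - g by rewrite /e divfK ?gt_eqF.
have e1 : e <= 1 by rewrite /e ler_pdivrMr // mul1r; lra.
nra.
Qed.

Lemma eventually_forall_le {P : nat -> nat -> Prop} :
  (forall i, exists J, forall j, (J <= j)%N -> P i j) ->
  forall N, exists J, forall i, (i <= N)%N -> forall j, (J <= j)%N -> P i j.
Proof.
move=> evP; elim=> [|N [J PJ]].
  by have [J PJ] := evP 0%N; exists J => i; rewrite leqn0 => /eqP ->.
have [J' PJ'] := evP N.+1; exists (maxn J J') => i; rewrite leq_eqVlt.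
case/orP => [/eqP -> j Jj | iN j Jj].
  by apply: PJ'; apply: leq_trans Jj; exact: leq_maxr.
by apply: PJ => //; apply: leq_trans Jj; exact: leq_maxl.
Qed.

Section Approximation.
Context {R : realType} {n : nat}.
Local Notation V := 'rV[R]_(n.+1).
Implicit Types (C K S T : set V) (u v w x y z : V).

(* [p] is a Funk limit, seen from [C], of points of [C] that lie below [p] in
   the order of [S]. *)
Definition approximable C S := forall p, S p -> exists x : nat -> V,
  (forall j, C (x j)) /\ (forall j, closure S (p - x j)) /\
  forall w, C w -> forall mu, Mfunk S w p < mu ->
    exists J, forall j, (J <= j)%N -> Mfunk C w (x j) <= mu.

Definition funk_dense C (r : nat -> V) := forall w, C w -> forall e : R, 0 < e ->
  exists i, C (r i) /\ Mfunk C w (r i) <= 1 + e /\ Mfunk C (r i) w <= 1 + e.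

Lemma approximable_refl C : nontrivial_cone C -> approximable C C.
Proof.
move=> oC p Cp; exists (fun=> p); split => //; split.
  by move=> j; rewrite subrr; exact: closure_cone0 oC.1.
by move=> w Cw mu /ltW Mmu; exists 0%N.
Qed.

(* Some [mu p - w + la z] lies in [T], and adding further multiples of [z]
   keeps it in the closure of [T]. *)
Lemma Mfunk_tau_ray {T z p l0 w mu} : nontrivial_cone T -> bdry T z ->
  0 < l0 -> T (p + l0 *: z) -> Mfunk (tau T z) w p < mu ->
  exists t0 : nat, forall t : nat, (t0 <= t)%N ->
    Mfunk T w (p + (l0 + t%:R) *: z) <= mu.
Proof.
move=> oT bz l00 Tp gmu; have cT := oT.1; have cS := open_cone_tau oT bz.
have Sp : tau T z p by apply/(tauP cT); exists l0.
set g := Mfunk _ w p in gmu; have g0 : 0 <= g := Mfunk_ge0 cS Sp.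
have mid : g < (g + mu) / 2 by rewrite ltr_pdivlMr //; lra.
have mu0 : 0 < mu by lra.
have gap : 0 < mu - (g + mu) / 2 by lra.
have Sm : tau T z (mu *: p - w).
  have := closure_open_coneD cS (Mfunk_lt_closure cS Sp mid) (open_coneZ cS gap Sp).
  by have -> : (g + mu) / 2 *: p - w + (mu - (g + mu) / 2) *: p = mu *: p - w
    by row_eq.
have [la [la0 Tla]] := (tauP cT).1 Sm.
exists (Num.truncn (la / mu)).+1 => t Nt; apply: (Mfunk_le mu0).
have ge : 0 <= mu * (l0 + t%:R) - la.
  have : la / mu <= l0 + t%:R.
    apply: le_trans (ltW (truncnS_gt _)) _; apply: ler_wpDl; first exact: ltW.
    by rewrite ler_nat.
  have : mu * (la / mu) = la by rewrite mulrC divfK ?gt_eqF.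
  nra.
have := closure_open_coneD cT (closure_coneZ cT ge (bdry_closure bz)) Tla.
have -> : (mu * (l0 + t%:R) - la) *: z + (mu *: p - w + la *: z) =
  mu *: (p + (l0 + t%:R) *: z) - w by row_eq.
exact: subset_closure.
Qed.

Section Diagonal.
Context {C T S : set V} {r : nat -> V} {p : V} {y : nat -> V}.
Hypotheses (oC : nontrivial_cone C) (oS : nontrivial_cone S)
  (CT : C `<=` T) (TS : T `<=` S) (AT : approximable C T) (rd : funk_dense C r)
  (Sp : S p) (Ty : forall t, T (y t)) (clpy : forall t, closure S (p - y t))
  (ray : forall w, C w -> forall mu, Mfunk S w p < mu ->
     exists t0, forall t, (t0 <= t)%N -> Mfunk T w (y t) <= mu).

Lemma diagonal_choice : exists x : nat -> V,
  (forall t, C (x t)) /\ (forall t, closure T (y t - x t)) /\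
  forall t i, (i <= t)%N -> C (r i) ->
    Mfunk C (r i) (x t) <= Mfunk T (r i) (y t) + t.+1%:R^-1.
Proof.
have [xs Hxs] := choice (fun t => AT _ (Ty t)).
have uniform t : exists J, forall i, (i <= t)%N -> forall j, (J <= j)%N ->
    C (r i) -> Mfunk C (r i) (xs t j) <= Mfunk T (r i) (y t) + t.+1%:R^-1.
  apply: (eventually_forall_le (P := fun i j => C (r i) ->
    Mfunk C (r i) (xs t j) <= Mfunk T (r i) (y t) + t.+1%:R^-1)) => i.
  have [Cri|nCri] := pselect (C (r i)); last by exists 0%N => j _ /nCri.
  have [_ [_ Hx]] := Hxs t.
  have lt : Mfunk T (r i) (y t) < Mfunk T (r i) (y t) + t.+1%:R^-1.
    by rewrite ltrDl invr_gt0 ltr0n.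
  by have [J HJ] := Hx _ Cri _ lt; exists J => j Jj _; exact: HJ.
have [Jf HJf] := choice uniform.
exists (fun t => xs t (Jf t)); split; first by move=> t; exact: (Hxs t).1.
split; first by move=> t; exact: (Hxs t).2.1.
by move=> t i it Cri; exact: HJf.
Qed.

(* For [w] in [C], pick [r i] Funk-close to [w]; the triangle inequality
   through [r i] transfers the bound of [diagonal_choice], which holds
   uniformly in [i <= t]. *)
Lemma diagonal_approx : exists x : nat -> V,
  (forall j, C (x j)) /\ (forall j, closure S (p - x j)) /\
  forall w, C w -> forall mu, Mfunk S w p < mu ->
    exists J, forall j, (J <= j)%N -> Mfunk C w (x j) <= mu.
Proof.
have [x [Cx [clyx xr]]] := diagonal_choice.
exists x; split; first exact: Cx.
split.
  move=> t; have -> : p - x t = (p - y t) + (y t - x t) by row_eq.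
  exact: closure_coneD oS.1 (clpy t) (closureS TS (clyx t)).
move=> w Cw mu gmu; have Sw : S w := TS _ (CT _ Cw).
have [e e0 He] := perturb_le_of_lt (Mfunk_ge0 (x := w) oS.1 Sp) gmu.
have [i [Cri [Mwr Mrw]]] := rd _ Cw e e0.
have Mrp : Mfunk S (r i) p <= (1 + e) * Mfunk S w p.
  apply: le_trans (Mfunk_triangle oS.1 Sw Sp) _.
  apply: ler_wpM2r; first exact: Mfunk_ge0 oS.1 Sp.
  apply: le_trans Mrw.
  exact: Mfunk_le_subcone oC.1 oS.1 (fun v Cv => TS _ (CT _ Cv)) Cw.
have [t1 Ht1] : exists t1, forall t, (t1 <= t)%N ->
    Mfunk T (r i) (y t) <= (1 + e) * Mfunk S w p + e.
  by apply: ray Cri _ _; apply: le_lt_trans Mrp _; rewrite ltrDl.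
exists (maxn t1 (maxn i (Num.truncn e^-1).+1)) => t.
rewrite !geq_max => /and3P [t1t it Nt].
have te : t.+1%:R^-1 <= e.
  rewrite -(lef_pV2 _ _) ?invrK ?posrE ?invr_gt0 ?ltr0n //.
  by apply: le_trans (ltW (truncnS_gt _)) _; rewrite ler_nat; exact: leqW.
apply: le_trans (Mfunk_triangle oC.1 Cri (Cx t)) _; apply: le_trans He.
apply: ler_pM; [exact: Mfunk_ge0 oC.1 Cri | exact: Mfunk_ge0 oC.1 (Cx t) |
  exact: Mwr | ].
by apply: le_trans (xr t i it Cri) _; exact: lerD (Ht1 t t1t) te.
Qed.

End Diagonal.

Lemma approximable_tau {C T z r} : nontrivial_cone C -> nontrivial_cone T ->
  C `<=` T -> approximable C T -> bdry T z -> funk_dense C r ->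
  approximable C (tau T z).
Proof.
move=> oC oT CT AT bz rd p /(tauP oT.1) [l0 [l00 Tp]]; have cT := oT.1.
have oS := nontrivial_tau oT bz; have TS := sub_tau oT bz.
pose y (t : nat) := p + (l0 + t%:R) *: z.
apply: (diagonal_approx (y := y) oC oS CT TS AT rd).
- by apply/(tauP cT); exists l0.
- move=> t; have := closure_open_coneD cT
    (closure_coneZ cT (ler0n _ t) (bdry_closure bz)) Tp.
  by have -> : t%:R *: z + (p + l0 *: z) = y t by rewrite /y; row_eq.
- move=> t; have -> : p - y t = (l0 + t%:R) *: - z by rewrite /y; row_eq.
  by apply: closure_coneZ oS.1 _ (closure_tau_opp oT bz); rewrite addr_ge0 // ltW.
- by move=> w _ mu; exact: Mfunk_tau_ray oT bz l00 Tp.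
Qed.

Lemma approximable_iter {C r k S} : nontrivial_cone C -> funk_dense C r ->
  iter k (@Gamma R n) [set C] S -> approximable C S.
Proof.
move=> oC rd; elim: k S => [|k IH] S /=; first by move=> ->; exact: approximable_refl.
move=> [T [z [PT [_ [bz ->]]]]].
have [oT CT _ _] := admissible_iter oC PT.
exact: approximable_tau oC oT CT (IH _ PT) bz rd.
Qed.

End Approximation.

Section RationalPoints.
Context {R : realType} {n : nat}.
Local Notation V := 'rV[R]_(n.+1).

Lemma exists_rat_near (x : R) {d : R} : 0 < d -> exists q : rat, `|x - ratr q| < d.
Proof.
move=> d0; have [y [xy [q _ qy]]] :=
  @dense_rat R (ball x d) (ex_intro _ x (ballxx x d0)) (ball_open x d).
by exists q; rewrite qy; move: xy; rewrite -ball_normE.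
Qed.

Lemma exists_rat_row_near (w : V) {d : R} : 0 < d ->
  exists q : 'rV[rat]_(n.+1), `|w - map_mx ratr q| < d.
Proof.
move=> d0; have [f fP] := choice (fun j : 'I_(n.+1) => exists_rat_near (w 0 j) d0).
exists (\row_j f j); rewrite [`|_|]mx_normrE; apply: bigmax_lt => // -[i j] _ /=.
by rewrite (ord1 i) !mxE.
Qed.

Definition rat_points (i : nat) : V :=
  if @unpickle 'rV[rat]_(n.+1) i is Some q then map_mx ratr q else 0.

Lemma funk_dense_rat_points {C : set V} : nontrivial_cone C ->
  funk_dense C rat_points.
Proof.
move=> oC w Cw e e0; have cC := oC.1; have e1 : 0 < 1 + e by lra.
have [r1 r10 wC] := open_normball cC.2.1 Cw.
have [r2 r20 ewC] := open_normball cC.2.1 (open_coneZ cC e0 Cw).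
have d0 : 0 < Num.min r1 (r2 / (1 + e)) by rewrite lt_min r10 divr_gt0.
have [q wq] := exists_rat_row_near w d0.
exists (pickle q); rewrite /rat_points pickleK.
set v := map_mx ratr q in wq *.
have wv1 : `|w - v| < r1 by apply: lt_le_trans wq _; rewrite ge_min lexx.
have wv2 : (1 + e) * `|w - v| < r2.
  rewrite -ltr_pdivlMl //; apply: lt_le_trans wq _.
  by rewrite ge_min mulrC lexx orbT.
split; first exact: wC.
split; apply: (Mfunk_le e1); apply: subset_closure; apply: ewC.
  have -> : e *: w - ((1 + e) *: v - w) = (1 + e) *: (w - v) by row_eq.
  by rewrite normrZ ger0_norm ?ltW.
have -> : e *: w - ((1 + e) *: w - v) = - (w - v) by row_eq.
rewrite normrN; apply: le_lt_trans wv2.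
by rewrite ler_peMl // ?normr_ge0 // lerDl ltW.
Qed.

End RationalPoints.

Section LimInf.
Context {R : realType}.
Local Open Scope ereal_scope.

Lemma limn_einf_ge_cvg {u : nat -> R} (v : nat -> R) {L : R} :
  (forall k, (v k <= u k)%R) ->
  v @ \oo --> L -> L%:E <= limn_einf (fun k => (u k)%:E).
Proof.
move=> vu /cvgrPdist_le vL; apply/lee_subgt0Pr => e e0.
have [N _ NvL] := vL e e0.
rewrite limn_einf_lim; apply: lime_ge; first exact: is_cvg_einfs.
exists N => // m Nm; apply: le_ereal_inf_tmp => _ [k /= mk <-].
rewrite -EFinD lee_fin; apply: le_trans (vu k).
have := NvL k (leq_trans Nm mk); have := ler_norm (L - v k); lra.
Qed.

Lemma limn_einf_le_cvg {u : nat -> R} (w : nat -> R) {L : R} :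
  (forall k, (u k <= w k)%R) ->
  w @ \oo --> L -> limn_einf (fun k => (u k)%:E) <= L%:E.
Proof.
move=> uw /cvgrPdist_le wL; apply/lee_addgt0Pr => e e0.
have [N _ NwL] := wL e e0.
rewrite limn_einf_lim; apply: lime_le; first exact: is_cvg_einfs.
exists N => // m Nm; apply: (@le_trans _ _ (u m)%:E).
  by apply: ereal_inf_lbound; exists m => /=.
rewrite -EFinD lee_fin; apply: le_trans (uw m) _.
have := NwL m Nm; rewrite distrC; have := ler_norm (w m - L); lra.
Qed.

End LimInf.

Section FunkBusemann.
Context {R : realType} {n : nat}.
Local Notation V := 'rV[R]_(n.+1).
Implicit Types (C K S T : set V) (u v w x y z : V).

(* [lra] reads the arithmetic hypotheses and compares atoms up to conversion,
   which unfolds Funk distances; so it runs with these abstracted and the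
   inequalities between gauges cleared. *)
Ltac lra_funk :=
  repeat match goal with
  | |- context [funk ?K ?x ?y] => generalize (funk K x y)
  | |- context [ln ?t] => generalize (ln t)
  end;
  repeat match goal with
  | H : context [Mfunk _ _ _] |- _ =>
      lazymatch type of H with is_true _ => clear H end
  end;
  intros; lra.

Local Notation funk_liminf C b T q x :=
  (limn_einf (fun k => (funk C b (x k) + fTp b T q (x k))%:E)).

(* Through [w]: the triangle inequality in [T] and [F_T <= F_C]. *)
Lemma funk_liminf_ge {C S T b p q} {x : nat -> V} {w} :
  nontrivial_cone C -> nontrivial_cone T -> C `<=` T -> T q ->
  (forall k, C (x k)) -> funk_conv C b x (fTp b S p) -> C w ->
  ((funk T w q - fTp b S p w - funk T b q)%:E <= funk_liminf C b T q x)%E.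
Proof.
move=> oC oT CT Tq Cx conv Cw.
apply: (limn_einf_ge_cvg (fun k => funk T w q - fTp b C (x k) w - funk T b q)).
  move=> k; rewrite /fTp.
  have := funk_triangle oT (CT _ Cw) (CT _ (Cx k)) Tq.
  have := funk_le_subcone oC oT CT Cw (Cx k); lra_funk.
by apply: cvgB; [apply: cvgB; [exact: cvg_cst | exact: conv] | exact: cvg_cst].
Qed.

(* Otherwise [c q - u - t d] stays in the closure of [T] for all [t >= 0],
   and dividing by [t] puts [-d] there too. *)
Lemma Mfunk_ray_unbounded {T q} u {d} : nontrivial_cone T -> T q ->
  ~ closure T (- d) ->
  forall c : R, exists t : R, 0 <= t /\ c <= Mfunk T (u + t *: d) q.
Proof.
move=> oT Tq ncl c; apply: contrapT => bounded; apply: ncl.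
have lt_c t : 0 <= t -> Mfunk T (u + t *: d) q < c.
  by move=> t0; rewrite ltNge; apply/negP => ct; apply: bounded; exists t.
have cT := oT.1; apply: (closure_of_shift cT Tq) => e e0.
have [s s0 seg] := open_segment (u - c *: q) cT.2.1 (open_coneZ cT e0 Tq).
have sV0 : 0 <= s^-1 by rewrite invr_ge0 ltW.
have := closure_open_coneD cT
  (closure_coneZ cT (ltW s0) (Mfunk_lt_closure cT Tq (lt_c _ sV0)))
  (seg s (ltW s0) (lexx _)).
have s_neq0 : s != 0 by rewrite gt_eqF.
by have -> : s *: (c *: q - (u + s^-1 *: d)) + (e *: q + s *: (u - c *: q)) =
  - d + e *: q by apply/rowP => i; rewrite !mxE; field.
Qed.

Section ApproximatingSequence.
Context {C S : set V} {b p : V} {x : nat -> V}.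
Hypotheses (oC : nontrivial_cone C) (oS : nontrivial_cone S) (CS : C `<=` S)
  (Sp : S p) (Cx : forall k, C (x k)) (clpx : forall k, closure S (p - x k))
  (approx : forall w, C w -> forall mu, Mfunk S w p < mu ->
    exists J, forall j, (J <= j)%N -> Mfunk C w (x j) <= mu).

Lemma approx_funk_cvg w : C w -> (fun k => funk C w (x k)) @ \oo --> funk S w p.
Proof.
move=> Cw; have MSp := Mfunk_gt0 oS (CS _ Cw) Sp.
have lim_M : (fun k => Mfunk C w (x k)) @ \oo --> Mfunk S w p.
  apply/cvgrPdist_le => e e0.
  have [J MJ] : exists J, forall j, (J <= j)%N -> Mfunk C w (x j) <= Mfunk S w p + e.
    by apply: approx Cw _ _; rewrite ltrDl.
  exists J => // j Jj.
  have lo : Mfunk S w p <= Mfunk C w (x j).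
    apply: le_trans (Mfunk_le_subcone oC.1 oS.1 CS (Cx j)).
    exact: Mfunk_antir oS.1 (CS _ (Cx j)) (clpx j).
  by rewrite distrC ger0_norm ?subr_ge0 // lerBlDl; exact: MJ.
exact: (@continuous_cvg nat R R \oo _ _ (@ln R) _ (continuous_ln MSp) lim_M).
Qed.

Lemma approx_funk_conv : C b -> funk_conv C b x (fTp b S p).
Proof.
by move=> Cb w Cw; apply: cvgB; [exact: approx_funk_cvg | exact: approx_funk_cvg].
Qed.

(* As [x k] lies below [p] in the order of [S], [F_T(x k, p) <= F_S(x k, p) <= 0]. *)
Lemma approx_funk_liminf_le {T q} : nontrivial_cone T -> S `<=` T -> T q -> C b ->
  (funk_liminf C b T q x <= (funk S b p + funk T p q - funk T b q)%:E)%E.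
Proof.
move=> oT ST Tq Cb.
apply: (limn_einf_le_cvg (fun k => funk C b (x k) + funk T p q - funk T b q)).
  move=> k; rewrite /fTp.
  have := funk_triangle oT (ST _ (CS _ (Cx k))) (ST _ Sp) Tq.
  have := funk_le_subcone oS oT ST (CS _ (Cx k)) Sp.
  have := funk_le0 oS (CS _ (Cx k)) Sp (clpx k); lra_funk.
apply: cvgB; last exact: cvg_cst.
by apply: cvgD; [exact: approx_funk_cvg | exact: cvg_cst].
Qed.

End ApproximatingSequence.

Lemma funk_liminf_ge_sub {C S T b p q} {x : nat -> V} :
  nontrivial_cone C -> admissible C S -> admissible C T -> S `<=` T ->
  S p -> T q -> (forall k, C (x k)) -> funk_conv C b x (fTp b S p) ->
  ((funk S b p + funk T p q - funk T b q)%:E <= funk_liminf C b T q x)%E.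
Proof.
move=> oC AS AT ST Sp Tq Cx conv.
have oS := admissible_nontrivial AS; have oT := admissible_nontrivial AT.
have [w [Cw [clpw clwp]]] := admissible_lineal AS _ Sp.
apply: le_trans (funk_liminf_ge oC oT (admissible_sub AT) Tq Cx conv Cw).
rewrite lee_fin /fTp.
have := funk_le0 oS (admissible_sub AS _ Cw) Sp clpw.
have := funk_monol oT (ST _ Sp) Tq (closureS ST clwp); lra_funk.
Qed.

(* Along the escape direction the Funk distance to [q] in [T] blows up while
   the distance to [p] in [S] stays bounded. *)
Lemma funk_liminf_pinfty {C S T b p q} {x : nat -> V} :
  nontrivial_cone C -> admissible C S -> admissible C T -> ~ S `<=` T ->
  S p -> T q -> (forall k, C (x k)) -> funk_conv C b x (fTp b S p) ->
  funk_liminf C b T q x = +oo%E.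
Proof.
move=> oC AS AT nST Sp Tq Cx conv.
have oS := admissible_nontrivial AS; have oT := admissible_nontrivial AT.
have [S' [oS' [S'S [S'T [QS' [d [cld [clmd nclmd]]]]]]]] :=
  admissible_escape AS T oT.1 (admissible_sub AT) nST.
have [u S'u] := oS'.1.1; have MSu := Mfunk_gt0 oS (S'S _ S'u) Sp.
apply: eq_infty => B.
pose c := B + funk T b q - funk S b p + ln (Mfunk S u p).
have [t [t0 Mt]] := Mfunk_ray_unbounded u oT Tq nclmd (expR c).
have S'ut : S' (u + t *: d).
  by rewrite addrC; exact: closure_open_coneD oS'.1 (closure_coneZ oS'.1 t0 cld) S'u.
have [w [Cw [cl1 cl2]]] := QS' _ S'ut.
apply: le_trans (funk_liminf_ge oC oT (admissible_sub AT) Tq Cx conv Cw).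
have Sw := admissible_sub AS _ Cw.
have MSw : Mfunk S w p <= Mfunk S u p.
  apply: le_trans (Mfunk_monol oS.1 Sp (closureS S'S cl1)) _.
  apply: Mfunk_monol oS.1 Sp _.
  have -> : u - (u + t *: d) = t *: - d by row_eq.
  exact: closure_coneZ oS.1 t0 clmd.
have lnMT : c <= ln (Mfunk T w q).
  rewrite -[c in c <= _]expRK; apply: ln_ler (expR_gt0 c) _.
  exact: le_trans Mt (Mfunk_monol oT.1 Tq (closureS S'T cl2)).
move: lnMT; rewrite /c lee_fin /fTp /funk.
have := ln_ler (Mfunk_gt0 oS Sw Sp) MSw; lra_funk.
Qed.

End FunkBusemann.

Theorem proposition4p6 (R : realType) (n : nat) (C : set 'rV[R]_(n.+1))
  (b : 'rV[R]_(n.+1)) (S T : set 'rV[R]_(n.+1)) (p q : 'rV[R]_(n.+1)) :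
  open_cone C -> proper_cone C -> C b ->
  Tcones C S -> S <> C -> Tcones C T -> T <> C ->
  S p -> T q ->
  busemann C b (fTp b S p) -> busemann C b (fTp b T q) ->
  let I := ereal_inf [set l : \bar R | exists x : nat -> 'rV[R]_(n.+1),
              (forall k, C (x k)) /\ funk_conv C b x (fTp b S p) /\
              l = limn_einf (fun k => (funk C b (x k) + fTp b T q (x k))%:E)] in
  (S `<=` T -> I = (funk S b p + funk T p q - funk T b q)%:E) /\
  (~ (S `<=` T) -> I = +oo%E).
Proof.
move=> cC pC Cb [kS [_ iterS]] _ [kT [_ iterT]] _ Sp Tq _ _ I.
have oC := proper_nontrivial cC pC.
have AS := admissible_iter oC iterS; have AT := admissible_iter oC iterT.
have oS := admissible_nontrivial AS; have CS := admissible_sub AS.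
split=> [ST | nST]; apply/eqP; rewrite eq_le; apply/andP; split.
- have [x [Cx [clpx approx]]] :=
    approximable_iter oC (funk_dense_rat_points oC) iterS _ Sp.
  apply: (le_trans _ (approx_funk_liminf_le oC oS CS Sp Cx clpx approx
    (admissible_nontrivial AT) ST Tq Cb)).
  apply: ereal_inf_lbound; exists x; split=> //; split=> //.
  exact: approx_funk_conv oC oS CS Sp Cx clpx approx Cb.
- apply: le_ereal_inf_tmp => _ [x [Cx [conv ->]]].
  exact: funk_liminf_ge_sub oC AS AT ST Sp Tq Cx conv.
- exact: leey.
- apply: le_ereal_inf_tmp => _ [x [Cx [conv ->]]].
  by rewrite (funk_liminf_pinfty oC AS AT nST Sp Tq Cx conv).
Qed.
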